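(* Let $\mathcal P$ be a non-degenerate polar space of finite rank $n\ge2$ with no thin lines, and let $H$ be a hyperplane of $\mathcal P$ which, as a polar space, is non-degenerate of rank $n$. Then $S_n(H)$ generates the dual polar space $\mathcal P_n$; consequently $\mathrm{gr}(\mathcal P_n)\le\mathrm{gr}(H_n)$.
   Context: $\mathcal P$ is a point-line geometry (polar space); a subspace is a set of points containing every line meeting it in $\ge2$ points; a hyperplane is a proper subspace meeting every line. Singular subspaces (pairwise collinear subspaces) are projective spaces; a $k$-subspace is a singular subspace of projective rank $k$ (dimension $k-1$); $S_k(\mathcal P)$ is their set and $S_k(H)$ the set of those contained in $H$. The dual polar space $\mathcal P_n$ has points $S_n(\mathcal P)$ and lines $\{Z\in S_n(\mathcal P):Z\supset X\}$ for $X\in S_{n-1}(\mathcal P)$; $H_n$ is the dual polar space of $H$. A set generates a geometry if the smallest subspace containing it is everything; $\mathrm{gr}$ is the minimum size of a generating set. *)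

From Stdlib Require Import Arith.

Section Geometry.
(* A point-line geometry: a type of points [Pt], a point set [D] (the
   "universe" of the geometry, so that induced geometries such as a
   hyperplane can be treated uniformly), and a predicate [Ln] on sets of
   points selecting the lines. *)
Context {Pt : Type} (Ln : (Pt -> Prop) -> Prop) (D : Pt -> Prop).

Definition subset (A B : Pt -> Prop) : Prop := forall x, A x -> B x.

Definition lineIn (L : Pt -> Prop) : Prop := Ln L /\ subset L D.

Definition collinear (x y : Pt) : Prop :=
  x = y \/ exists L, lineIn L /\ L x /\ L y.

(* partial linear space + Buekenhout-Shult one-or-all axiom *)
Definition polar_space : Prop :=
  (forall L, lineIn L -> exists x y, x <> y /\ L x /\ L y) /\
  (forall L M x y, lineIn L -> lineIn M -> x <> y ->
      L x -> L y -> M x -> M y -> forall z, L z <-> M z) /\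
  (forall p L, D p -> lineIn L ->
      (forall x, L x -> collinear p x) \/
      (exists x, (L x /\ collinear p x) /\
                 forall y, L y /\ collinear p y -> y = x)).

Definition nondegenerate : Prop :=
  forall x, D x -> exists y, D y /\ ~ collinear x y.

Definition no_thin_lines : Prop :=
  forall L, lineIn L -> exists x y z, L x /\ L y /\ L z /\
                         x <> y /\ x <> z /\ y <> z.

Definition subspace (S : Pt -> Prop) : Prop :=
  subset S D /\
  forall L, lineIn L ->
    (exists x y, x <> y /\ L x /\ L y /\ S x /\ S y) -> subset L S.

Definition singular (S : Pt -> Prop) : Prop :=
  subspace S /\ forall x y, S x -> S y -> collinear x y.

Definition hyperplane (H : Pt -> Prop) : Prop :=
  subspace H /\ (exists x, D x /\ ~ H x) /\
  forall L, lineIn L -> exists x, L x /\ H x.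

Definition has_chain (X : Pt -> Prop) (k : nat) : Prop :=
  exists f : nat -> Pt -> Prop,
    (forall x, ~ f 0 x) /\ (forall x, f k x <-> X x) /\
    (forall i, i <= k -> subspace (f i)) /\
    (forall i, i < k -> subset (f i) (f (S i)) /\
                        exists x, f (S i) x /\ ~ f i x).

(* X is a singular subspace of projective rank k (dimension k-1):
   the maximal length of a chain of subspaces inside X is k *)
Definition k_subspace (k : nat) (X : Pt -> Prop) : Prop :=
  singular X /\ has_chain X k /\ ~ has_chain X (S k).

Definition has_rank (n : nat) : Prop :=
  (exists X, k_subspace n X) /\
  forall X k, singular X -> has_chain X k -> k <= n.

Definition generates (A : Pt -> Prop) : Prop :=
  subset A D /\ forall S, subspace S -> subset A S -> subset D S.

End Geometry.

Definition dual_points {Pt : Type} (Ln : (Pt -> Prop) -> Prop) (D : Pt -> Prop)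
  (n : nat) : (Pt -> Prop) -> Prop := k_subspace Ln D n.

Definition dual_lines {Pt : Type} (Ln : (Pt -> Prop) -> Prop) (D : Pt -> Prop)
  (n : nat) : ((Pt -> Prop) -> Prop) -> Prop :=
  fun Lam => exists X, k_subspace Ln D (n - 1) X /\
    forall Z, Lam Z <-> (k_subspace Ln D n Z /\ subset X Z).

Definition card_le {T : Type} (B A : T -> Prop) : Prop :=
  exists f : T -> T, (forall x, B x -> A (f x)) /\
    (forall x y, B x -> B y -> f x = f y -> x = y).

(* A maximal singular subspace [M] of the polar space not contained in the
   hyperplane [H] meets [H] in a next-to-maximal singular subspace [X] of [H].
   As [H] is non-degenerate, [X] lies in two maximal subspaces [Y1], [Y2] of
   [H]: extend [X] to a maximal [Y1], then pick [q] in [X^perp] outside [Y1]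
   (every point of [X^perp \ X] is non-collinear with some point of [X^perp])
   and take [Y2 = <X, q>].  So [M] lies on the line of the dual polar space
   through [Y1] and [Y2], and every subspace of [P_n] containing [S_n(H)]
   contains [M].  A generating set of [H_n] then also generates [P_n]: the
   trace on [S_n(H)] of a subspace of [P_n] is a subspace of [H_n]. *)

From Stdlib Require Import Arith Lia Classical.

Section PolarSpace.
Context {Pt : Type} (Ln : (Pt -> Prop) -> Prop) (D : Pt -> Prop).
Hypothesis PS : polar_space Ln D.

Local Notation coll := (collinear Ln D).
Local Notation lin := (lineIn Ln D).
Local Notation sub := (subspace Ln D).
Local Notation chain := (has_chain Ln D).

Definition setI (A B : Pt -> Prop) : Pt -> Prop := fun x => A x /\ B x.
Definition setU1 (A : Pt -> Prop) (p : Pt) : Pt -> Prop := fun y => A y \/ y = p.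
Definition perp_pt (p : Pt) : Pt -> Prop := fun y => D y /\ coll p y.
Definition perp (A : Pt -> Prop) : Pt -> Prop :=
  fun y => D y /\ forall x, A x -> coll x y.
Definition span (A : Pt -> Prop) : Pt -> Prop :=
  fun y => forall S, sub S -> subset A S -> S y.

Definition rank_ge (X : Pt -> Prop) (k : nat) : Prop := exists j, k <= j /\ chain X j.
Definition rank_le (X : Pt -> Prop) (k : nat) : Prop := forall j, chain X j -> j <= k.

Lemma collinear_refl x : coll x x.
Proof. now left. Qed.

Lemma collinear_sym x y : coll x y -> coll y x.
Proof. intros [->|[L [HL [Hx Hy]]]]; [now left | right; exists L; auto]. Qed.

Lemma collinear_line x y : coll x y -> x <> y -> exists L, lin L /\ L x /\ L y.
Proof. intros [->|H] Hn; [congruence | exact H]. Qed.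

Lemma collinear_on_line L x y : lin L -> L x -> L y -> coll x y.
Proof.
  intros HL Lx Ly. destruct (classic (x = y)) as [->|nxy]; [apply collinear_refl|].
  right; exists L; auto.
Qed.

Lemma lineIn_mem L x : lin L -> L x -> D x.
Proof. intros [_ HL] Hx; exact (HL x Hx). Qed.

Lemma collinear_line_of_two p L a b : D p -> lin L -> L a -> L b -> a <> b ->
  coll p a -> coll p b -> forall x, L x -> coll p x.
Proof.
  intros Dp HL La Lb Hab ca cb. destruct PS as [_ [_ oneall]].
  destruct (oneall p L Dp HL) as [H|[x [[Lx cx] U]]]; auto.
  exfalso. apply Hab. now rewrite (U a (conj La ca)), (U b (conj Lb cb)).
Qed.

Lemma exists_collinear_on_line p L : D p -> lin L -> exists x, L x /\ coll p x.
Proof.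
  intros Dp HL. destruct PS as [two [_ oneall]].
  destruct (oneall p L Dp HL) as [H|[x [[Lx cx] _]]].
  - destruct (two L HL) as [x [y [_ [Lx _]]]]. exists x; auto.
  - exists x; auto.
Qed.

Lemma unique_collinear_on_line p L x : D p -> lin L -> L x -> ~ coll p x ->
  exists u, L u /\ coll p u /\ forall y, L y -> coll p y -> y = u.
Proof.
  intros Dp HL Lx nc. destruct PS as [_ [_ oneall]].
  destruct (oneall p L Dp HL) as [H|[u [[Lu cu] U]]].
  - exfalso; auto.
  - exists u; repeat split; auto.
Qed.

Lemma subspace_full : sub D.
Proof. split; [intros x h; exact h | intros L [_ HL] _; exact HL]. Qed.

Lemma subspace_empty : sub (fun _ => False).
Proof. split; [intros x [] | intros L _ [x [y [_ [_ [_ [[] _]]]]]]]. Qed.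

Lemma subspace_setI A B : sub A -> sub B -> sub (setI A B).
Proof.
  intros [AD Aline] [_ Bline]. split.
  - intros x [Ax _]; auto.
  - intros L HL [x [y [nxy [Lx [Ly [[Ax Bx] [Ay By]]]]]]] z Lz.
    split; [apply (Aline L HL) | apply (Bline L HL)]; auto; exists x, y; auto.
Qed.

Lemma subspace_mem A x : sub A -> A x -> D x.
Proof. intros [h _] ax; exact (h x ax). Qed.

Lemma subspace_line A L x y : sub A -> lin L -> x <> y -> L x -> L y -> A x -> A y ->
  forall z, L z -> A z.
Proof. intros [_ h] HL nxy Lx Ly Ax Ay z Lz. apply (h L HL); [exists x, y; auto | auto]. Qed.

Lemma subspace_perp_pt p : D p -> sub (perp_pt p).
Proof.
  intros Dp. split; [intros x [h _]; exact h|].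
  intros L HL [x [y [nxy [Lx [Ly [[_ cx] [_ cy]]]]]]] z Lz. split.
  - exact (lineIn_mem L z HL Lz).
  - exact (collinear_line_of_two p L x y Dp HL Lx Ly nxy cx cy z Lz).
Qed.

Lemma subspace_perp A : subset A D -> sub (perp A).
Proof.
  intros AD. split; [intros x [h _]; exact h|].
  intros L HL [x [y [nxy [Lx [Ly [[_ cx] [_ cy]]]]]]] z Lz. split.
  - exact (lineIn_mem L z HL Lz).
  - intros a Aa.
    exact (collinear_line_of_two a L x y (AD a Aa) HL Lx Ly nxy (cx a Aa) (cy a Aa) z Lz).
Qed.

Lemma sub_span A : subset A (span A).
Proof. intros x Ax S _ HS; exact (HS x Ax). Qed.

Lemma span_min A S : sub S -> subset A S -> subset (span A) S.
Proof. intros HS HAS x Hx; exact (Hx S HS HAS). Qed.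

Lemma subspace_span A : subset A D -> sub (span A).
Proof.
  intros AD. split.
  - intros x Hx. exact (Hx D subspace_full AD).
  - intros L HL [x [y [nxy [Lx [Ly [Sx Sy]]]]]] z Lz S HS HAS.
    exact (subspace_line S L x y HS HL nxy Lx Ly (Sx S HS HAS) (Sy S HS HAS) z Lz).
Qed.

(* [span A] is inside the subspace [perp_pt z] as soon as [A] is. *)
Lemma collinear_span A z : D z -> (forall a, A a -> coll z a) ->
  forall y, span A y -> coll z y.
Proof.
  intros Dz Hz y Hy.
  enough (Hzy : perp_pt z y) by apply Hzy.
  apply Hy; [apply subspace_perp_pt; auto|].
  intros a Aa; split; auto.
  destruct (Hz a Aa) as [<-|[L [HL [_ La]]]]; auto. exact (lineIn_mem L a HL La).
Qed.

Lemma singular_span A : subset A D -> (forall x y, A x -> A y -> coll x y) ->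
  singular Ln D (span A).
Proof.
  intros AD Hc. split; [apply subspace_span; auto|].
  intros u v Hu Hv.
  apply (collinear_span A); [exact (Hu D subspace_full AD) | | exact Hv].
  intros a Aa. apply collinear_sym.
  apply (collinear_span A); [exact (AD a Aa) | | exact Hu]. intros b Ab; auto.
Qed.

Lemma singular_span_setU1 A w : singular Ln D A -> D w -> (forall a, A a -> coll a w) ->
  singular Ln D (span (setU1 A w)).
Proof.
  intros [sA cA] Dw Aw. apply singular_span.
  - intros e [Ae| ->]; auto. exact (subspace_mem A e sA Ae).
  - intros p q [Ap| ->] [Aq| ->]; auto using collinear_sym, collinear_refl.
Qed.

Lemma singular_subset Z A : singular Ln D Z -> sub A -> subset A Z -> singular Ln D A.
Proof. intros [_ c] HA AZ. split; auto. Qed.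

Lemma chain_mono (f : nat -> Pt -> Prop) k :
  (forall i, i < k -> subset (f i) (f (S i))) ->
  forall i j, i <= j -> j <= k -> subset (f i) (f j).
Proof.
  intros Hinc i j Hij. induction Hij; intros Hk x Hx; auto.
  apply (Hinc m); [lia|]. apply IHHij; [lia | auto].
Qed.

Lemma has_chain_ext A B k : chain A k -> (forall x, A x <-> B x) -> chain B k.
Proof.
  intros [f [H0 [Hk [Hs Hi]]]] E. exists f; split; [|split; [|split]]; auto.
  intros x; split; intros h; [apply E, Hk, h | apply Hk, E, h].
Qed.

Lemma has_chain_empty A : (forall x, ~ A x) -> chain A 0.
Proof.
  intros HA. exists (fun _ _ => False). split; [|split; [|split]].
  - intros x [].
  - intros x; split; [intros [] | intros Ax; exact (HA x Ax)].
  - intros i _; apply subspace_empty.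
  - intros i Hi; lia.
Qed.

Lemma has_chain0_empty A : chain A 0 -> forall x, ~ A x.
Proof. intros [f [H0 [Hk _]]] x Ax. apply (H0 x), Hk, Ax. Qed.

Lemma has_chain_extend A B k x : chain A k -> sub B -> subset A B -> B x -> ~ A x ->
  chain B (S k).
Proof.
  intros [f [H0 [Hk [Hs Hi]]]] HB HAB Bx nAx.
  exists (fun i => if Nat.leb i k then f i else B). split; [|split; [|split]].
  - exact H0.
  - intros y. rewrite (proj2 (Nat.leb_gt (S k) k) ltac:(lia)). tauto.
  - intros i _. destruct (Nat.leb i k) eqn:E; auto. apply Hs. apply Nat.leb_le in E; lia.
  - intros i Hik. rewrite (proj2 (Nat.leb_le i k) ltac:(lia)).
    destruct (Nat.leb (S i) k) eqn:E.
    + apply Nat.leb_le in E. apply (Hi i); lia.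
    + apply Nat.leb_gt in E. assert (i = k) as -> by lia. split.
      * intros y Hy. apply HAB, Hk, Hy.
      * exists x; split; auto. intros Hf; apply nAx, Hk, Hf.
Qed.

Lemma has_chain_prefix X k : chain X (S k) ->
  exists Y, sub Y /\ subset Y X /\ chain Y k /\ exists b, X b /\ ~ Y b.
Proof.
  intros [f [H0 [Hk [Hs Hi]]]]. exists (f k). split; [|split; [|split]].
  - apply Hs; lia.
  - intros x Hx. apply Hk, (Hi k); auto.
  - exists f; split; [exact H0 | split; [intros x; tauto | split]].
    + intros i Hik; apply Hs; lia.
    + intros i Hik; apply Hi; lia.
  - destruct (Hi k ltac:(lia)) as [_ [b [Hb nb]]]. exists b; split; auto. apply Hk; auto.
Qed.

Lemma rank_ge_of_chain A k : chain A k -> rank_ge A k.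
Proof. intros h; exists k; split; auto. Qed.

Lemma rank_ge_weaken X k j : rank_ge X k -> j <= k -> rank_ge X j.
Proof. intros [i [h1 h2]] h. exists i; split; auto; lia. Qed.

Lemma rank_ge_mono A B k : rank_ge A k -> sub B -> subset A B -> rank_ge B k.
Proof.
  intros [j [hj ch]] HB HAB.
  destruct (classic (exists x, B x /\ ~ A x)) as [[x [Bx nAx]]|nE].
  - exists (S j); split; [lia|]. apply (has_chain_extend A B j x); auto.
  - exists j; split; auto. apply (has_chain_ext A); auto. intros x; split; auto.
    intros Bx. apply NNPP. intros nAx. apply nE. exists x; auto.
Qed.

Lemma rank_ge_step A B k x : rank_ge A k -> sub B -> subset A B -> B x -> ~ A x ->
  rank_ge B (S k).
Proof.
  intros [j [hj ch]] HB HAB Bx nAx. exists (S j); split; [lia|].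
  apply (has_chain_extend A B j x); auto.
Qed.

Lemma has_chain_of_rank A k : rank_ge A k -> rank_le A k -> chain A k.
Proof.
  intros [j [hj ch]] r. assert (j <= k) by (apply r; auto).
  now replace k with j by lia.
Qed.

Lemma rank_le_strict A B k x : rank_le B (S k) -> sub B -> subset A B -> B x -> ~ A x ->
  rank_le A k.
Proof.
  intros r HB HAB Bx nAx j ch.
  specialize (r (S j) (has_chain_extend A B j x ch HB HAB Bx nAx)). lia.
Qed.

Lemma subset_of_rank A B k : sub B -> subset A B -> rank_ge A k -> rank_le B k ->
  subset B A.
Proof.
  intros HB HAB c r x Bx. apply NNPP. intros nAx.
  destruct (rank_ge_step A B k x c HB HAB Bx nAx) as [j [hj ch]].
  specialize (r j ch). lia.
Qed.

Lemma exists_not_in_of_rank A K k : sub K -> rank_le K k -> rank_ge A (S k) ->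
  exists a, A a /\ ~ K a.
Proof.
  intros sK rK cA. apply NNPP. intros nE.
  destruct (rank_ge_mono A K (S k) cA sK) as [j [hj ch]].
  - intros e Ae. apply NNPP. intros nKe. apply nE. exists e; auto.
  - specialize (rK j ch). lia.
Qed.

Lemma rank_ge_span_setU1 A k w : rank_ge A k -> subset (setU1 A w) D -> ~ A w ->
  rank_ge (span (setU1 A w)) (S k).
Proof.
  intros cA AwD nAw. apply (rank_ge_step A _ k w); auto.
  - apply subspace_span; auto.
  - intros e Ae; apply sub_span; left; auto.
  - apply sub_span; right; auto.
Qed.

Lemma subset_span_setU1 X K k x : sub X -> subset K X -> rank_ge K k -> rank_le X (S k) ->
  X x -> ~ K x -> subset X (span (setU1 K x)).
Proof.
  intros sX KX cK rX Xx nKx.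
  assert (KxD : subset (setU1 K x) D).
  { intros e [Ke| ->]; [apply (subspace_mem X); auto | apply (subspace_mem X); auto]. }
  apply (subset_of_rank _ X (S k)); auto.
  - apply span_min; auto. intros e [Ke| ->]; auto.
  - apply rank_ge_span_setU1; auto.
Qed.

Lemma rank_ge_setI_meeting (G S0 : Pt -> Prop) : sub G -> singular Ln D S0 ->
  (forall L, lin L -> subset L S0 -> exists x, L x /\ G x) ->
  forall k U, sub U -> subset U S0 -> chain U k -> rank_ge (setI U G) (k - 1).
Proof.
  intros HG [_ cS0] Hmeet k. induction k as [|k IH]; intros U HU US0 ch.
  { exists 0; split; auto. apply has_chain_empty. intros x [Ux _].
    exact (has_chain0_empty U ch x Ux). }
  destruct (has_chain_prefix U k ch) as [Y [HY [YU [chY [b [Ub nYb]]]]]].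
  assert (HUG : sub (setI U G)) by (apply subspace_setI; auto).
  destruct (classic (forall x, Y x -> G x)) as [YG|nYG].
  { replace (S k - 1) with k by lia.
    apply (rank_ge_mono Y); auto using rank_ge_of_chain. intros x Yx; split; auto. }
  apply not_all_ex_not in nYG. destruct nYG as [a nYa].
  apply imply_to_and in nYa. destruct nYa as [Ya nGa].
  destruct k as [|k]; [exfalso; exact (has_chain0_empty Y chY a Ya)|].
  assert (IHY : rank_ge (setI Y G) (S k - 1))
    by (apply IH; auto; intros x Yx; apply US0, YU, Yx).
  destruct (classic (exists z, U z /\ G z /\ ~ Y z)) as [[z [Uz [Gz nYz]]]|nz].
  - replace (S (S k) - 1) with (S (S k - 1)) by lia.
    apply (rank_ge_step (setI Y G) (setI U G) _ z); auto.
    + intros x [Yx Gx]; split; auto.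
    + split; auto.
    + intros [Yz _]; auto.
  - (* the line [ab] lies in [U] and meets [G], necessarily inside [Y]; so [b] is in [Y] *)
    exfalso.
    assert (nab : a <> b) by (intros ->; auto).
    destruct (collinear_line a b (cS0 a b (US0 a (YU a Ya)) (US0 b Ub)) nab)
      as [L [HL [La Lb]]].
    assert (LU : subset L U)
      by (intros z Lz; exact (subspace_line U L a b HU HL nab La Lb (YU a Ya) Ub z Lz)).
    destruct (Hmeet L HL (fun z Lz => US0 z (LU z Lz))) as [c [Lc Gc]].
    assert (Yc : Y c) by (apply NNPP; intros nYc; apply nz; exists c; auto).
    assert (nac : a <> c) by (intros ->; auto).
    apply nYb. exact (subspace_line Y L a c HY HL nac La Lc Ya Yc b Lb).
Qed.

(* Let [Q] be a point of [S] not collinear with [k], [A] the point of [l]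
   collinear with [Q], [R] a point of [S] not collinear with [A], [C] the
   point of [QA] collinear with [R], and [p] the point of [RC] collinear
   with [k].  If [p] were collinear with [a], it would be collinear with all
   of [l]; going around the triangle [l, QA, RC] then forces [k ~ Q]. *)
Lemma exists_collinear_not_collinear S l k a : sub S -> lin l -> subset l S ->
  l k -> l a -> k <> a -> (forall b, l b -> exists R, S R /\ ~ coll b R) ->
  exists p, S p /\ coll k p /\ ~ coll a p.
Proof.
  intros sS Hl lS lk la nka sep.
  assert (DS : forall x, S x -> D x) by (intros x Sx; exact (subspace_mem S x sS Sx)).
  destruct (sep k lk) as [Q [SQ nkQ]].
  destruct (unique_collinear_on_line Q l k (DS Q SQ) Hl lk
              (fun h => nkQ (collinear_sym _ _ h))) as [A [lA [cQA _]]].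
  destruct (sep A lA) as [R [SR nAR]].
  destruct (unique_collinear_on_line R l A (DS R SR) Hl lA
              (fun h => nAR (collinear_sym _ _ h))) as [B [lB [cRB _]]].
  assert (nAB : A <> B) by (intros <-; apply nAR, collinear_sym; auto).
  assert (nQA : Q <> A) by (intros ->; apply nkQ, (collinear_on_line l); auto).
  destruct (collinear_line Q A cQA nQA) as [m [Hm [mQ mA]]].
  destruct (unique_collinear_on_line R m A (DS R SR) Hm mA
              (fun h => nAR (collinear_sym _ _ h))) as [C [mC [cRC _]]].
  assert (nCA : C <> A) by (intros ->; apply nAR, collinear_sym; auto).
  assert (nRC : R <> C) by (intros ->; apply nAR, (collinear_on_line m); auto).
  assert (SC : S C)
    by exact (subspace_line S m Q A sS Hm nQA mQ mA SQ (lS A lA) C mC).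
  destruct (collinear_line R C cRC nRC) as [N [HN [NR NC]]].
  destruct (exists_collinear_on_line k N (DS k (lS k lk)) HN) as [p [Np ckp]].
  assert (Sp : S p) by exact (subspace_line S N R C sS HN nRC NR NC SR SC p Np).
  exists p; split; [|split]; auto. intros cap.
  assert (pl : forall x, l x -> coll p x)
    by (apply (collinear_line_of_two p l k a (DS p Sp) Hl lk la nka);
        apply collinear_sym; auto).
  destruct (classic (p = R)) as [->|npR]; [apply nAR, collinear_sym; auto|].
  assert (cBC : coll B C).
  { apply (collinear_line_of_two B N p R (lineIn_mem l B Hl lB) HN Np NR npR); auto;
      apply collinear_sym; auto. }
  assert (cCk : coll C k).
  { apply (collinear_line_of_two C l A B (DS C SC) Hl lA lB nAB); auto.
    - apply (collinear_on_line m); auto.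
    - apply collinear_sym; auto. }
  apply nkQ, (collinear_line_of_two k m C A (DS k (lS k lk)) Hm mC mA nCA); auto.
  - apply collinear_sym; auto.
  - apply (collinear_on_line l); auto.
Qed.

Hypothesis ND : nondegenerate Ln D.

Lemma exists_perp_not_collinear r K : singular Ln D K -> chain K r -> rank_le K r ->
  forall a, perp K a -> ~ K a -> exists R, perp K R /\ ~ coll a R.
Proof.
  revert K. induction r as [|r IH]; intros K sK chK rK a pa nKa.
  { destruct (ND a (proj1 pa)) as [y [Dy ny]]. exists y; split; auto.
    split; auto. intros x Kx. exfalso; exact (has_chain0_empty K chK x Kx). }
  destruct (has_chain_prefix K r chK) as [K' [sK' [K'K [chK' [k [Kk nK'k]]]]]].
  assert (subK : sub K) by apply sK.
  assert (rK' : rank_le K' r) by (apply (rank_le_strict K' K r k); auto).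
  assert (sgK' : singular Ln D K') by (apply (singular_subset K); auto).
  assert (K'D : subset K' D) by (intros e He; exact (subspace_mem K' e sK' He)).
  assert (KK'k : subset K (span (setU1 K' k)))
    by (apply (subset_span_setU1 K K' r k); auto using rank_ge_of_chain).
  assert (nka : k <> a) by (intros ->; auto).
  destruct (collinear_line k a (proj2 pa k Kk) nka) as [l [Hl [lk la]]].
  assert (lperp : subset l (perp K')).
  { intros z lz.
    apply (subspace_line (perp K') l k a (subspace_perp K' K'D) Hl nka lk la); auto.
    - split; [exact (subspace_mem K k subK Kk) | intros x Hx; apply (proj2 sK); auto].
    - split; [exact (proj1 pa) | intros x Hx; apply (proj2 pa); auto]. }
  destruct (exists_collinear_not_collinear (perp K') l k a (subspace_perp K' K'D)
              Hl lperp lk la nka) as [p [pK' [ckp nap]]].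
  - (* a point [b] of [l] in [K'] would put all of [l], hence [a], into [K] *)
    intros b lb. apply (IH K' sgK' chK' rK' b (lperp b lb)). intros K'b.
    assert (nbk : b <> k) by (intros ->; auto).
    apply nKa, (subspace_line K l b k subK Hl nbk lb lk (K'K b K'b) Kk a la).
  - exists p; split; auto. split; [exact (proj1 pK')|].
    intros z Kz. apply collinear_sym.
    apply (collinear_span (setU1 K' k) p (proj1 pK')); auto.
    intros e [K'e| ->]; [apply collinear_sym, (proj2 pK'); auto | apply collinear_sym; auto].
Qed.

Lemma exists_perp_outside X Y r y : singular Ln D X -> chain X r -> rank_le X r ->
  singular Ln D Y -> subset X Y -> Y y -> ~ X y -> exists q, perp X q /\ ~ Y q.
Proof.
  intros sX chX rX [sY cY] XY Yy nXy.
  assert (pXy : perp X y)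
    by (split; [exact (subspace_mem Y y sY Yy) | intros x Xx; apply cY; auto]).
  destruct (exists_perp_not_collinear r X sX chX rX y pXy nXy) as [q [pXq nyq]].
  exists q; split; [exact pXq | intros Yq; apply nyq, cY; auto].
Qed.

Variable n : nat.
Hypothesis rank_bound : forall X k, singular Ln D X -> chain X k -> k <= n.
Hypothesis n_pos : 0 < n.

Lemma rank_le_singular Z : singular Ln D Z -> rank_le Z n.
Proof. intros sZ j ch. exact (rank_bound Z j sZ ch). Qed.

Lemma has_chain_of_subspace U W : sub U -> singular Ln D W -> subset U W ->
  exists j, chain U j.
Proof.
  intros sU sW UW.
  (* grow a chain inside [U] point by point; the rank bound stops it by step [n+1] *)
  assert (grow : forall m, (exists j, chain U j) \/
                           exists V, sub V /\ subset V U /\ chain V m).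
  { induction m as [|m [done|[V [sV [VU chV]]]]]; [|left; exact done|].
    - right. exists (fun _ => False).
      split; [apply subspace_empty | split; [intros x [] | apply has_chain_empty; auto]].
    - destruct (classic (exists x, U x /\ ~ V x)) as [[x [Ux nVx]]|nE].
      + right. exists (span (setU1 V x)).
        assert (VxD : subset (setU1 V x) D)
          by (intros e [Ve| ->]; apply (subspace_mem U); auto).
        split; [apply subspace_span; auto | split].
        * apply span_min; auto. intros e [Ve| ->]; auto.
        * apply (has_chain_extend V _ m x); auto.
          -- apply subspace_span; auto.
          -- intros e Ve; apply sub_span; left; auto.
          -- apply sub_span; right; auto.
      + left. exists m. apply (has_chain_ext V); auto. intros x; split; auto.
        intros Ux. apply NNPP; intros nVx; apply nE; exists x; auto. }
  destruct (grow (S n)) as [done|[V [sV [VU chV]]]]; auto.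
  exfalso. enough (S n <= n) by lia.
  apply (rank_bound V); auto. apply (singular_subset W); auto. intros x Vx; auto.
Qed.

Lemma maximal_step X W x : singular Ln D X -> singular Ln D W -> chain W n ->
  X x -> ~ W x ->
  exists W', singular Ln D W' /\ chain W' n /\ W' x /\ subset (setI W X) W'.
Proof.
  intros [sX cX] sW chW Xx nWx.
  assert (Dx : D x) by exact (subspace_mem X x sX Xx).
  set (Wx := setI W (perp_pt x)).
  assert (sWx : sub Wx) by (apply subspace_setI; [apply sW | apply subspace_perp_pt; auto]).
  assert (cWx : rank_ge Wx (n - 1)).
  { apply (rank_ge_setI_meeting (perp_pt x) W); auto.
    - apply subspace_perp_pt; auto.
    - intros L HL _. destruct (exists_collinear_on_line x L Dx HL) as [y [Ly cy]].
      exists y; split; [|split]; auto. exact (lineIn_mem L y HL Ly).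
    - apply sW.
    - intros e h; auto. }
  exists (span (setU1 Wx x)).
  assert (sW' : singular Ln D (span (setU1 Wx x))).
  { apply singular_span_setU1; auto.
    - apply (singular_subset W); auto. intros e [We _]; auto.
    - intros e [_ [_ h]]. apply collinear_sym; auto. }
  split; [|split; [|split]]; auto.
  - apply has_chain_of_rank; [|apply rank_le_singular; auto].
    replace n with (S (n - 1)) by lia.
    apply rank_ge_span_setU1; auto.
    + intros e [e'| ->]; auto. exact (subspace_mem Wx e sWx e').
    + intros [We _]; auto.
  - apply sub_span; right; auto.
  - intros e [We Xe]. apply sub_span. left. split; auto.
    split; [exact (subspace_mem X e sX Xe) | apply cX; auto].
Qed.

Lemma singular_sub_maximal X W : singular Ln D X -> singular Ln D W -> chain W n ->
  exists Y, singular Ln D Y /\ chain Y n /\ subset X Y.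
Proof.
  intros sX sW chW.
  (* each [maximal_step] raises the rank of the meet with [X], which is at most [n] *)
  assert (climb : forall m W, singular Ln D W -> chain W n -> rank_ge (setI W X) (n - m) ->
            exists Y, singular Ln D Y /\ chain Y n /\ subset X Y).
  { induction m as [|m IH]; intros W0 sW0 chW0 cW0;
      (destruct (classic (subset X W0)) as [XW0|nXW0]; [exists W0; auto|]);
      (destruct (not_all_ex_not _ _ nXW0) as [x nx];
       apply imply_to_and in nx; destruct nx as [Xx nW0x]);
      destruct (maximal_step X W0 x sX sW0 chW0 Xx nW0x) as [W1 [sW1 [chW1 [W1x W01]]]];
      (assert (c1 : forall k, rank_ge (setI W0 X) k -> rank_ge (setI W1 X) (S k))
         by (intros k ck; apply (rank_ge_step (setI W0 X) _ k x); auto;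
             [ apply subspace_setI; [apply sW1 | apply sX]
             | intros e [We Xe]; split; auto; apply W01; split; auto
             | split; auto
             | intros [h _]; auto ])).
    - exfalso. destruct (c1 _ cW0) as [j [hj chj]].
      enough (j <= n) by lia.
      apply (rank_bound (setI W1 X)); auto.
      apply (singular_subset W1); auto.
      + apply subspace_setI; [apply sW1 | apply sX].
      + intros e [h _]; auto.
    - apply (IH W1); auto. apply (rank_ge_weaken _ (S (n - S m))); auto. lia. }
  assert (sWX : sub (setI W X)) by (apply subspace_setI; [apply sW | apply sX]).
  destruct (has_chain_of_subspace (setI W X) W sWX sW) as [j chj];
    [intros e [h _]; auto|].
  apply (climb n W); auto. exists j; split; auto; lia.
Qed.

Lemma two_maximals_through X : singular Ln D X -> chain X (n - 1) -> rank_le X (n - 1) ->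
  (exists W, singular Ln D W /\ chain W n) ->
  exists Y1 Y2, Y1 <> Y2 /\ singular Ln D Y1 /\ chain Y1 n /\ subset X Y1 /\
                singular Ln D Y2 /\ chain Y2 n /\ subset X Y2.
Proof.
  intros sX chX rX [W [sW chW]].
  destruct (singular_sub_maximal X W sX sW chW) as [Y1 [sY1 [chY1 XY1]]].
  destruct (exists_not_in_of_rank Y1 X (n - 1) (proj1 sX) rX) as [y [Y1y nXy]].
  { replace (S (n - 1)) with n by lia. apply rank_ge_of_chain; auto. }
  destruct (exists_perp_outside X Y1 (n - 1) y sX chX rX sY1 XY1 Y1y nXy)
    as [q [[Dq pXq] nY1q]].
  assert (XqD : subset (setU1 X q) D)
    by (intros e [Xe| ->]; auto; exact (subspace_mem X e (proj1 sX) Xe)).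
  assert (sY2 : singular Ln D (span (setU1 X q))) by (apply singular_span_setU1; auto).
  assert (chY2 : chain (span (setU1 X q)) n).
  { apply has_chain_of_rank; [|apply rank_le_singular; auto].
    replace n with (S (n - 1)) by lia.
    apply (rank_ge_span_setU1 X); [apply rank_ge_of_chain; auto | auto |].
    intros Xq; apply nY1q, XY1, Xq. }
  exists Y1, (span (setU1 X q)).
  split; [|split; [|split; [|split; [|split; [|split]]]]]; auto.
  - intros E. apply nY1q. rewrite E. apply sub_span; right; auto.
  - intros e Xe; apply sub_span; left; auto.
Qed.

End PolarSpace.

Lemma k_subspace_of_rank {Pt : Type} (Ln : (Pt -> Prop) -> Prop) (D X : Pt -> Prop) k :
  singular Ln D X -> has_chain Ln D X k -> rank_le Ln D X k -> k_subspace Ln D k X.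
Proof. intros sX chX rX. split; [|split]; auto. intros ch. specialize (rX _ ch). lia. Qed.

Section Induced.
Context {Pt : Type} (Ln : (Pt -> Prop) -> Prop) (D H : Pt -> Prop).
Hypothesis subH : subspace Ln D H.

Lemma lineIn_of_induced L : lineIn Ln H L -> lineIn Ln D L.
Proof. intros [HL LH]; split; auto. intros x Lx; apply (proj1 subH), LH, Lx. Qed.

Lemma lineIn_induced L x y : lineIn Ln D L -> L x -> L y -> x <> y -> H x -> H y ->
  lineIn Ln H L.
Proof.
  intros HL Lx Ly nxy Hx Hy. split; [apply HL|].
  intros z Lz. apply (proj2 subH L HL); auto. exists x, y; auto.
Qed.

Lemma collinear_of_induced x y : collinear Ln H x y -> collinear Ln D x y.
Proof.
  intros [->|[L [HL h]]]; [now left | right; exists L; split; auto].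
  apply lineIn_of_induced; auto.
Qed.

Lemma collinear_induced x y : H x -> H y -> collinear Ln D x y -> collinear Ln H x y.
Proof.
  intros Hx Hy [->|[L [HL [Lx Ly]]]]; [now left|].
  destruct (classic (x = y)) as [->|nxy]; [now left|].
  right; exists L; split; auto. apply (lineIn_induced L x y); auto.
Qed.

Lemma subspace_of_induced S : subspace Ln H S -> subspace Ln D S.
Proof.
  intros [SH Sline]. split; [intros x Sx; apply (proj1 subH), SH, Sx|].
  intros L HL [x [y [nxy [Lx [Ly [Sx Sy]]]]]].
  apply Sline; [apply (lineIn_induced L x y); auto | exists x, y; auto].
Qed.

Lemma subspace_induced S : subspace Ln D S -> subset S H -> subspace Ln H S.
Proof.
  intros [_ Sline] SH. split; auto.
  intros L HL Hex. apply Sline; auto. apply lineIn_of_induced; auto.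
Qed.

Lemma has_chain_of_induced X k : has_chain Ln H X k -> has_chain Ln D X k.
Proof.
  intros [f [h0 [hk [hs hi]]]]. exists f; split; [|split; [|split]]; auto.
  intros i Hi; apply subspace_of_induced; auto.
Qed.

Lemma has_chain_induced X k : subset X H -> has_chain Ln D X k -> has_chain Ln H X k.
Proof.
  intros XH [f [h0 [hk [hs hi]]]]. exists f; split; [|split; [|split]]; auto.
  intros i Hi; apply subspace_induced; auto.
  intros x fx. apply XH, hk. apply (chain_mono f k (fun j hj => proj1 (hi j hj)) i k); auto.
Qed.

Lemma rank_le_induced X k : rank_le Ln D X k -> rank_le Ln H X k.
Proof. intros rX j ch. apply rX, has_chain_of_induced, ch. Qed.

Lemma singular_of_induced S : singular Ln H S -> singular Ln D S /\ subset S H.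
Proof.
  intros [sS cS]. split; [split|].
  - apply subspace_of_induced; auto.
  - intros x y Sx Sy; apply collinear_of_induced; auto.
  - apply sS.
Qed.

Lemma singular_induced S : singular Ln D S -> subset S H -> singular Ln H S.
Proof.
  intros [sS cS] SH. split; [apply subspace_induced; auto|].
  intros x y Sx Sy; apply collinear_induced; auto.
Qed.

Lemma k_subspace_of_induced k Z : k_subspace Ln H k Z -> k_subspace Ln D k Z /\ subset Z H.
Proof.
  intros [sZ [chZ nch]]. destruct (singular_of_induced Z sZ) as [sZ' ZH].
  split; auto. split; [|split]; auto; [apply has_chain_of_induced; auto|].
  intros ch; apply nch, has_chain_induced; auto.
Qed.

Lemma k_subspace_induced k Z : k_subspace Ln D k Z -> subset Z H -> k_subspace Ln H k Z.
Proof.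
  intros [sZ [chZ nch]] ZH.
  split; [apply singular_induced; auto | split; [apply has_chain_induced; auto|]].
  intros ch; apply nch, has_chain_of_induced; auto.
Qed.

Lemma polar_space_induced : polar_space Ln D -> polar_space Ln H.
Proof.
  intros [two [uniq oneall]]. split; [|split].
  - intros L HL. apply two, lineIn_of_induced; auto.
  - intros L M x y HL HM. apply uniq; apply lineIn_of_induced; auto.
  - intros p L Hp HL. assert (LH : subset L H) by apply HL.
    assert (Dp : D p) by exact (proj1 subH p Hp).
    destruct (oneall p L Dp (lineIn_of_induced L HL)) as [h|[x [[Lx cx] U]]].
    + left. intros x Lx. apply collinear_induced; auto.
    + right. exists x. split; [split; auto; apply collinear_induced; auto|].
      intros y [Ly cy]. apply U; split; auto. apply collinear_of_induced; auto.
Qed.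

End Induced.

Section HyperplaneSection.
Context {Pt : Type} (Ln : (Pt -> Prop) -> Prop) (D H : Pt -> Prop) (n : nat).
Hypothesis rank_bound : forall X k, singular Ln D X -> has_chain Ln D X k -> k <= n.
Hypothesis n_pos : 0 < n.
Hypothesis subH : subspace Ln D H.
Hypothesis meetH : forall L, lineIn Ln D L -> exists x, L x /\ H x.

Lemma setI_hyperplane_rank M m : k_subspace Ln D n M -> M m -> ~ H m ->
  singular Ln D (setI M H) /\ has_chain Ln D (setI M H) (n - 1) /\
  rank_le Ln D (setI M H) (n - 1).
Proof.
  intros [sM [chM _]] Mm nHm.
  assert (sMH : subspace Ln D (setI M H)) by (apply subspace_setI; [apply sM | apply subH]).
  assert (rMH : rank_le Ln D (setI M H) (n - 1)).
  { apply (rank_le_strict Ln D _ M (n - 1) m); auto.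
    - replace (S (n - 1)) with n by lia.
      apply rank_le_singular with (1 := rank_bound); auto.
    - apply sM.
    - intros x [Mx _]; auto.
    - intros [_ h]; auto. }
  split; [|split]; auto.
  - apply (singular_subset Ln D M); auto. intros x [Mx _]; auto.
  - apply has_chain_of_rank; auto.
    apply (rank_ge_setI_meeting Ln D H M subH sM (fun L HL _ => meetH L HL) n M);
      [apply sM | intros x Mx; exact Mx | exact chM].
Qed.

Lemma lineIn_dual_line_through X : k_subspace Ln D (n - 1) X ->
  lineIn (dual_lines Ln D n) (dual_points Ln D n)
    (fun Z => k_subspace Ln D n Z /\ subset X Z).
Proof.
  intros kX. split; [exists X; split; [exact kX | tauto]|]. intros Z [kZ _]; exact kZ.
Qed.

Lemma dual_subspace_induced S :
  subspace (dual_lines Ln D n) (dual_points Ln D n) S ->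
  subspace (dual_lines Ln H n) (dual_points Ln H n)
    (fun Z => S Z /\ k_subspace Ln H n Z).
Proof.
  intros sS. split; [intros Z [_ kZ]; exact kZ|].
  intros Lam [[X [kX HLam]] _] [Z1 [Z2 [n12 [Lam1 [Lam2 [[S1 _] [S2 _]]]]]]].
  destruct (k_subspace_of_induced Ln D H subH _ X kX) as [kXD XH].
  assert (lineS : subset (fun Z => k_subspace Ln D n Z /\ subset X Z) S).
  { apply (proj2 sS); [apply lineIn_dual_line_through; exact kXD|].
    apply HLam in Lam1 as [k1 X1]. apply HLam in Lam2 as [k2 X2].
    exists Z1, Z2. split; [exact n12|].
    split; [split; [exact (proj1 (k_subspace_of_induced Ln D H subH _ _ k1)) | exact X1]|].
    split; [split; [exact (proj1 (k_subspace_of_induced Ln D H subH _ _ k2)) | exact X2]|].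
    auto. }
  intros Z LamZ. apply HLam in LamZ as [kZ XZ]. split; [|exact kZ].
  apply lineS. split; [exact (proj1 (k_subspace_of_induced Ln D H subH _ _ kZ)) | exact XZ].
Qed.

Hypothesis PS : polar_space Ln D.
Hypothesis NDH : nondegenerate Ln H.
Hypothesis rankH : has_rank Ln H n.

Lemma dual_subspace_of_hyperplane_points S :
  subspace (dual_lines Ln D n) (dual_points Ln D n) S ->
  (forall Z, k_subspace Ln D n Z -> subset Z H -> S Z) ->
  subset (dual_points Ln D n) S.
Proof.
  intros sS SH M kM.
  destruct (classic (subset M H)) as [MH|nMH]; [apply SH; auto|].
  destruct (not_all_ex_not _ _ nMH) as [m nm]. apply imply_to_and in nm as [Mm nHm].
  destruct (setI_hyperplane_rank M m kM Mm nHm) as [sX [chX rX]].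
  set (X := setI M H) in *.
  assert (XH : subset X H) by (intros x [_ Hx]; exact Hx).
  destruct rankH as [[W [sW [chW _]]] rank_boundH].
  destruct (two_maximals_through Ln H (polar_space_induced Ln D H subH PS) NDH n
              rank_boundH n_pos X (singular_induced Ln D H subH X sX XH)
              (has_chain_induced Ln D H subH X _ XH chX) (rank_le_induced Ln D H subH X _ rX)
              (ex_intro _ W (conj sW chW)))
    as [Y1 [Y2 [n12 [sY1 [chY1 [XY1 [sY2 [chY2 XY2]]]]]]]].
  assert (maximalH : forall Y, singular Ln H Y -> has_chain Ln H Y n ->
                       k_subspace Ln D n Y /\ subset Y H).
  { intros Y sY chY. apply (k_subspace_of_induced Ln D H subH).
    apply k_subspace_of_rank; auto. apply rank_le_singular with (1 := rank_boundH); auto. }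
  destruct (maximalH Y1 sY1 chY1) as [kY1 Y1H].
  destruct (maximalH Y2 sY2 chY2) as [kY2 Y2H].
  apply (proj2 sS (fun Z => k_subspace Ln D n Z /\ subset X Z)).
  - apply lineIn_dual_line_through, k_subspace_of_rank; auto.
  - exists Y1, Y2. split; [exact n12|].
    split; [split; assumption|]. split; [split; assumption|].
    split; apply SH; assumption.
  - split; [exact kM | intros x [Mx _]; exact Mx].
Qed.

Lemma generates_dual_of_induced A :
  generates (dual_lines Ln H n) (dual_points Ln H n) A ->
  generates (dual_lines Ln D n) (dual_points Ln D n) A.
Proof.
  intros [AH genA]. split.
  - intros Z AZ. exact (proj1 (k_subspace_of_induced Ln D H subH n Z (AH Z AZ))).
  - intros S sS SA. apply dual_subspace_of_hyperplane_points; auto.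
    intros Z kZ ZH.
    enough (SZ : S Z /\ k_subspace Ln H n Z) by exact (proj1 SZ).
    apply (genA _ (dual_subspace_induced S sS)).
    + intros U AU; split; [apply SA | apply AH]; exact AU.
    + apply (k_subspace_induced Ln D H subH); auto.
Qed.

End HyperplaneSection.

Theorem mainTheorem14 (Pt : Type) (Ln : (Pt -> Prop) -> Prop) (n : nat)
  (H : Pt -> Prop) :
  let T := fun _ : Pt => True in
  polar_space Ln T -> nondegenerate Ln T -> has_rank Ln T n -> 2 <= n ->
  no_thin_lines Ln T ->
  hyperplane Ln T H -> nondegenerate Ln H -> has_rank Ln H n ->
  generates (dual_lines Ln T n) (dual_points Ln T n)
    (fun Z => k_subspace Ln T n Z /\ subset Z H) /\
  (forall A, generates (dual_lines Ln H n) (dual_points Ln H n) A ->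
     exists B, generates (dual_lines Ln T n) (dual_points Ln T n) B /\
               card_le B A).
Proof.
  intros T PST _ [_ rank_bound] n2 _ [subH [_ meetH]] NDH rankH.
  assert (n_pos : 0 < n) by lia.
  split.
  - split; [intros Z [kZ _]; exact kZ|].
    intros S sS SH.
    apply (dual_subspace_of_hyperplane_points Ln T H n rank_bound n_pos subH meetH PST
             NDH rankH S sS).
    intros Z kZ ZH; apply SH; split; assumption.
  - intros A genA. exists A. split.
    + exact (generates_dual_of_induced Ln T H n rank_bound n_pos subH meetH PST NDH rankH
               A genA).
    + exists (fun Z => Z). split; auto.
Qed.
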